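(* Let $T$ be a compact metric space with a finite Borel measure, $C:T\times T\to\mathbb{R}$ a continuous symmetric positive semidefinite kernel with Mercer expansion $C(s,t)=\sum_j\lambda_j\phi_j(s)\phi_j(t)$ ($\lambda_1\ge\lambda_2\ge\dots>0$, $\{\phi_j\}$ orthonormal in $L^2(T)$), and let $\eta>1$ be such that $\mathrm{tr}(C^{\eta-1})=\sum_j\lambda_j^{\eta-1}<\infty$ and $\kappa^2:=\sup_{x\in T}C^\eta(x,x)<\infty$, where $C^\eta(s,t)=\sum_j\lambda_j^\eta\phi_j(s)\phi_j(t)$. Let $\mathcal{H}_{C^\eta}$ be the RKHS of $C^\eta$ with norm $\|\cdot\|_{C^\eta}$. Data records are $d=(x,y)\in T\times\mathcal{Y}$, and the loss is $L(d,f)=\ell(y,f(x))$ where, for each $y$, $u\mapsto\ell(y,u)$ is convex and $M$-Lipschitz on $\mathbb{R}$ ($M$-admissible loss). For a dataset $D=(d_1,\dots,d_n)$ and $\psi>0$, let $\hat f_D$ be the minimizer over $f\in\mathcal{H}_{C^\eta}$ of $\frac1n\sum_{i=1}^nL(d_i,f)+\psi\|f\|_{C^\eta}^2$. Then $$\sup_{D\sim D'}\|\hat f_D-\hat f_{D'}\|_{1,C}\le\frac{M}{\psi n}\sqrt{\sup_{x}C^\eta(x,x)}\,\sqrt{\mathrm{tr}(C^{\eta-1})}.$$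
   Context: For $h\in L^2(T)$, $h_j=\langle h,\phi_j\rangle_{L^2}$ and $\|h\|_{1,C}=\sum_j|h_j|/\sqrt{\lambda_j}$. Datasets $D\sim D'$ are adjacent if they differ in exactly one record. (The paper's display writes the penalty as $\psi\|f\|_{C^\eta}$; its argument uses the squared norm, as stated here.) *)

From HB Require Import structures.
From mathcomp Require Import all_boot all_order all_algebra.
From mathcomp Require Import all_classical all_reals all_analysis.
Set Implicit Arguments. Unset Strict Implicit. Unset Printing Implicit Defensive.
Import Order.TTheory GRing.Theory Num.Theory.
Import numFieldNormedType.Exports.
Local Open Scope classical_set_scope.
Local Open Scope ring_scope.

Section Defs.
Variables (R : realType) (T : Type).

Definition kernel_symmetric (C : T -> T -> R) := forall s t, C s t = C t s.

Definition kernel_psd (C : T -> T -> R) :=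
  forall (m : nat) (x : 'I_m -> T) (c : 'I_m -> R),
    0 <= \sum_(i < m) \sum_(j < m) c i * c j * C (x i) (x j).

Definition kernel_pow (lam : nat -> R) (phi : nat -> T -> R) (eta : R)
  (s t : T) : R :=
  limn (fun N => \sum_(0 <= j < N) (lam j `^ eta) * phi j s * phi j t).

Definition trace_pow (lam : nat -> R) (eta : R) : R :=
  limn (fun N => \sum_(0 <= j < N) lam j `^ (eta - 1)).

(* a : nat -> R is the coefficient sequence (in the Mercer basis) of a
   function f of the RKHS H_{C^eta}:  f = sum_j a_j phi_j  pointwise, with
   sum_j a_j^2 / lambda_j^eta < oo. *)
Definition rkhs_rep (lam : nat -> R) (phi : nat -> T -> R) (eta : R)
  (f : T -> R) (a : nat -> R) : Prop :=
  cvgn (fun N => \sum_(0 <= j < N) a j ^+ 2 / lam j `^ eta) /\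
  forall x, (fun N => \sum_(0 <= j < N) a j * phi j x) @ \oo --> f x.

Definition in_rkhs lam phi eta (f : T -> R) : Prop :=
  exists a, rkhs_rep lam phi eta f a.

(* squared RKHS norm ||f||_{C^eta}^2 = sum_j a_j^2 / lambda_j^eta
   (the representation is unique; we take the infimum for definiteness) *)
Definition rkhs_sqnorm lam phi eta (f : T -> R) : R :=
  inf [set limn (fun N => \sum_(0 <= j < N) a j ^+ 2 / lam j `^ eta)
      | a in rkhs_rep lam phi eta f].

Definition reg_risk (Y : Type) (ell : Y -> R -> R) (n : nat)
  (D : 'I_n -> T * Y) lam phi eta (psi : R) (f : T -> R) : R :=
  n%:R^-1 * \sum_(i < n) ell (D i).2 (f (D i).1) + psi * rkhs_sqnorm lam phi eta f.

Definition is_reg_minimizer (Y : Type) (ell : Y -> R -> R) (n : nat)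
  (D : 'I_n -> T * Y) lam phi eta (psi : R) (f : T -> R) : Prop :=
  in_rkhs lam phi eta f /\
  forall g, in_rkhs lam phi eta g ->
    reg_risk ell D lam phi eta psi f <= reg_risk ell D lam phi eta psi g.

Definition adjacent_datasets (Y : Type) (n : nat) (D D' : 'I_n -> T * Y) : Prop :=
  exists i, D i <> D' i /\ forall j, j <> i -> D j = D' j.

Definition admissible_loss (Y : Type) (ell : Y -> R -> R) (M : R) : Prop :=
  (forall y u v (t : R), 0 <= t <= 1 ->
     ell y (t * u + (1 - t) * v) <= t * ell y u + (1 - t) * ell y v) /\
  (forall y u v, `|ell y u - ell y v| <= M * `|u - v|).

End Defs.

Section L2.
Variables (R : realType) (T : pointedType) (G : set (set T)).
Variable (mu : {measure set (g_sigma_algebraType G) -> \bar R}).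

Definition l2_coef (phi : nat -> T -> R) (h : T -> R) (j : nat) : R :=
  Rintegral mu [set: g_sigma_algebraType G] (fun x => h x * phi j x).

Definition norm1C (lam : nat -> R) (phi : nat -> T -> R) (h : T -> R) : \bar R :=
  (\sum_(0 <= j <oo) ((`|l2_coef phi h j| / Num.sqrt (lam j))%:E))%E.
End L2.

From HB Require Import structures.
From mathcomp Require Import all_boot all_order all_algebra.
From mathcomp Require Import all_classical all_reals all_analysis.
From mathcomp Require Import ring lra measurable_realfun.
Set Implicit Arguments.
Unset Strict Implicit.
Unset Printing Implicit Defensive.
Import Order.TTheory GRing.Theory Num.Theory.
Import numFieldNormedType.Exports.
Local Open Scope classical_set_scope.
Local Open Scope ring_scope.

(* Write f = sum_j a_j phi_j, so that ||f||_{C^eta}^2 = sum_j a_j^2 / lam_j^eta.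
   Cauchy-Schwarz with the weights lam_j^(eta/2) gives |f(x)| <= ||f|| sqrt(C^eta(x,x))
   and ||f||_{1,C} <= ||f|| sqrt(tr C^(eta-1)).  Since the regularizer is quadratic, a
   minimizer f_D satisfies psi ||g - f_D||^2 <= R_D(g) - R_D(f_D) for every g.  Adding
   this for D and D', the regularizers cancel and only the changed record remains, whose
   loss moves by at most M sup|f_D - f_D'| <= M kappa ||f_D - f_D'||; hence
   ||f_D - f_D'|| <= M kappa / (psi n).  That the RKHS norm is well defined rests on
   a_j = <f, phi_j>_{L^2}, obtained by dominated convergence. *)

Section RealDomainInequalities.
Variable R : realDomainType.
Implicit Types (u v : nat -> R) (N : nat).

Lemma normrM_le_sqrD (a b : R) : `|a * b| <= a ^+ 2 + b ^+ 2.
Proof.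
rewrite normrM -(real_normK (num_real a)) -(real_normK (num_real b)).
by have := normr_ge0 a; have := normr_ge0 b; nra.
Qed.

Lemma cauchy_schwarz_psum N u v :
  (\sum_(0 <= j < N) u j * v j) ^+ 2 <=
  (\sum_(0 <= j < N) u j ^+ 2) * (\sum_(0 <= j < N) v j ^+ 2).
Proof.
have sumM (a b : nat -> R) : (\sum_(0 <= i < N) a i) * (\sum_(0 <= j < N) b j)
    = \sum_(0 <= i < N) \sum_(0 <= j < N) a i * b j.
  by rewrite mulr_suml; apply: eq_bigr => i _; rewrite mulr_sumr.
set Su := \sum_(0 <= j < N) u j ^+ 2; set Sv := \sum_(0 <= j < N) v j ^+ 2.
set Suv := \sum_(0 <= j < N) u j * v j.
have lagrange : \sum_(0 <= i < N) \sum_(0 <= j < N) (u i * v j - u j * v i) ^+ 2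
    = Su * Sv + Sv * Su - (Suv * Suv) *+ 2.
  rewrite !sumM -!sumrMnl -big_split -sumrB; apply: eq_bigr => i _.
  by rewrite -!sumrMnl -big_split -sumrB; apply: eq_bigr => j _ /=; ring.
have : 0 <= \sum_(0 <= i < N) \sum_(0 <= j < N) (u i * v j - u j * v i) ^+ 2.
  by apply: sumr_ge0 => i _; apply: sumr_ge0 => j _; exact: sqr_ge0.
rewrite lagrange mulrC mulr2n -expr2; lra.
Qed.

End RealDomainInequalities.

Lemma cauchy_schwarz_psum_le (R : rcfType) N (u v : nat -> R) (A B : R) :
  \sum_(0 <= j < N) u j ^+ 2 <= A -> \sum_(0 <= j < N) v j ^+ 2 <= B ->
  `|\sum_(0 <= j < N) u j * v j| <= Num.sqrt A * Num.sqrt B.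
Proof.
move=> uA vB.
have A_ge0 : 0 <= A by apply: le_trans uA; apply: sumr_ge0 => j _; exact: sqr_ge0.
have B_ge0 : 0 <= B by apply: le_trans vB; apply: sumr_ge0 => j _; exact: sqr_ge0.
rewrite -sqrtrM // -sqrtr_sqr ler_sqrt ?mulr_ge0 //.
apply: le_trans (cauchy_schwarz_psum N u v) _.
by apply: ler_pM => //; apply: sumr_ge0 => j _; exact: sqr_ge0.
Qed.

Section RealFieldInequalities.
Variable R : realFieldType.

Lemma le_of_forall_onemM (c x : R) : (forall t, 0 < t < 1 -> (1 - t) * c <= x) -> c <= x.
Proof.
move=> H; rewrite leNgt; apply/negP => xc.
have c_gt0 : 0 < c by have := H 2^-1; lra.
set u := c - x; have u_gt0 : 0 < u by rewrite subr_gt0.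
have uc_gt0 : 0 < u + c by rewrite addr_gt0.
have t01 : 0 < u / (u + c) < 1 by rewrite divr_gt0 // ltr_pdivrMr // mul1r ltrDl.
have := H _ t01; have -> : (1 - u / (u + c)) * c = c ^+ 2 / (u + c) by field; rewrite gt_eqF.
rewrite ler_pdivrMr // /u; nra.
Qed.

Lemma le_div_of_mul_sqr_le (p r c : R) : 0 < p -> 0 <= r -> 0 <= c ->
  p * r ^+ 2 <= c * r -> r <= c / p.
Proof.
move=> p_gt0 r_ge0 c_ge0 prc; rewrite ler_pdivlMr //.
have [->|r_gt0] := eqVneq r 0; first by rewrite mul0r.
have {}r_gt0 : 0 < r by rewrite lt_neqAle eq_sym r_gt0.
nra.
Qed.

End RealFieldInequalities.

Section NonnegativeSeries.
Variable R : realType.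
Implicit Types (c u : nat -> R) (N : nat).

Lemma psum_le_limn c N : (forall j, 0 <= c j) ->
  cvgn (fun N => \sum_(0 <= j < N) c j) ->
  \sum_(0 <= j < N) c j <= limn (fun N => \sum_(0 <= j < N) c j).
Proof.
move=> c_ge0 c_cvg; apply: nondecreasing_cvgn_le => //.
by apply: nondecreasing_series => j _ _; exact: c_ge0.
Qed.

Lemma limn_psum_ge0 c : (forall j, 0 <= c j) ->
  cvgn (fun N => \sum_(0 <= j < N) c j) ->
  0 <= limn (fun N => \sum_(0 <= j < N) c j).
Proof. by move=> c_ge0 c_cvg; apply: le_trans (@psum_le_limn c 0 c_ge0 c_cvg); rewrite big_geq. Qed.

Lemma cvgn_psum_bounded c B : (forall j, 0 <= c j) ->
  (forall N, \sum_(0 <= j < N) c j <= B) ->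
  cvgn (fun N => \sum_(0 <= j < N) c j).
Proof.
move=> c_ge0 c_le; apply: nondecreasing_is_cvgn.
  by apply: nondecreasing_series => j _ _; exact: c_ge0.
by exists B => _ [N _ <-]; exact: c_le.
Qed.

Lemma norm_cvg_le u l B : u @ \oo --> l -> (forall N, `|u N| <= B) -> `|l| <= B.
Proof.
move=> ul uB; have <- : limn u = l by exact: cvg_lim.
have u_cvg : cvgn u by apply/cvg_ex; exists l.
rewrite ler_norml; apply/andP; split.
  by apply: limr_ge => //; apply: nearW => N; have /ler_normlP[] := uB N; rewrite lerNl.
by apply: limr_le => //; apply: nearW => N; have /ler_normlP[] := uB N.
Qed.

End NonnegativeSeries.

Lemma powR_subr1M (R : realType) (x r : R) : 0 < x -> x `^ r = x `^ (r - 1) * x.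
Proof.
move=> x_gt0; rewrite -[X in _ * X](powRr1 (ltW x_gt0)) -powRD ?subrK //.
by apply/implyP => _; rewrite gt_eqF.
Qed.

Section RintegralSum.
Context d (X : measurableType d) (R : realType) (mu : {measure set X -> \bar R}).
Variables (D : set X) (mD : measurable D).

Lemma Rintegral_sum (I : Type) (s : seq I) (f : I -> X -> R) :
  (forall i, mu.-integrable D (EFin \o f i)) ->
  \int[mu]_(x in D) (\sum_(i <- s) f i x) = \sum_(i <- s) \int[mu]_(x in D) f i x.
Proof.
move=> f_int; have intE i : (\int[mu]_(x in D) (f i x)%:E = (\int[mu]_(x in D) f i x)%:E)%E.
  by rewrite fineK // (integrable_fin_num mD (f_int i)).
rewrite {1}/Rintegral; under eq_integral do rewrite -sumEFin.
by rewrite integral_sum //; under eq_bigr do rewrite intE; rewrite sumEFin.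
Qed.

End RintegralSum.

Section OrthonormalCoefficients.
Context d (X : measurableType d) (R : realType).
Variables (mu : {finite_measure set X -> \bar R}) (phi : nat -> X -> R).
Hypothesis phi_meas : forall j, measurable_fun [set: X] (phi j).
Hypothesis phi_sq_int : forall j,
  mu.-integrable [set: X] (fun x => ((phi j x) ^+ 2)%:E).
Hypothesis phi_orth : forall i j,
  \int[mu]_(x in [set: X]) (phi i x * phi j x) = (i == j)%:R.

Lemma integrable_phiM k j :
  mu.-integrable [set: X] (EFin \o (fun x => phi k x * phi j x)).
Proof.
apply: le_integrable (integrableD measurableT (phi_sq_int k) (phi_sq_int j)) => //.
  by apply/measurable_EFinP; exact: measurable_funM.
move=> x _ /=; rewrite lee_fin [X in _ <= X]ger0_norm ?addr_ge0 ?sqr_ge0 //.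
exact: normrM_le_sqrD.
Qed.

Lemma integrable_phi j : mu.-integrable [set: X] (EFin \o phi j).
Proof.
have one_int := finite_measure_integrable_cst mu 1 measurableT.
apply: le_integrable (integrableD measurableT one_int (phi_sq_int j)) => //.
  exact/measurable_EFinP.
move=> x _ /=; rewrite lee_fin [X in _ <= X]ger0_norm ?addr_ge0 ?sqr_ge0 //.
by have := normrM_le_sqrD 1 (phi j x); rewrite mul1r expr1n.
Qed.

Lemma Rintegral_psum_phiM (a : nat -> R) j N :
  \int[mu]_(x in [set: X]) ((\sum_(0 <= k < N) a k * phi k x) * phi j x) =
  if (j < N)%N then a j else 0.
Proof.
under eq_Rintegral do rewrite mulr_suml.
rewrite Rintegral_sum //; last first.
  move=> k; apply: eq_integrable (integrableZl measurableT (a k) (integrable_phiM k j)) => //.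
  by move=> x _ /=; rewrite -EFinM mulrA.
rewrite -[RHS]/(if (0 <= j < N)%N then a j else 0) -(big_nat1_eq (@GRing.add R)) big_mkcond /=.
apply: eq_bigr => k _.
under eq_Rintegral do rewrite -mulrA.
rewrite RintegralZl ?phi_orth //; last exact: integrable_phiM.
by case: eqP => _; rewrite ?mulr1 ?mulr0.
Qed.

Lemma Rintegral_psum_lim_phiM (a : nat -> R) (F : X -> R) (B : R) :
  (forall N x, `|\sum_(0 <= k < N) a k * phi k x| <= B) ->
  (forall x, (fun N => \sum_(0 <= k < N) a k * phi k x) @ \oo --> F x) ->
  forall j, \int[mu]_(x in [set: X]) (F x * phi j x) = a j.
Proof.
move=> psum_le psum_cvg j.
pose g N x := ((\sum_(0 <= k < N) a k * phi k x) * phi j x)%:E.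
have g_meas N : measurable_fun [set: X] (g N).
  apply/measurable_EFinP; apply: measurable_funM => //.
  by apply: measurable_sum => k; exact: measurable_funM.
have g_cvg x : [set: X] x -> g ^~ x @ \oo --> (F x * phi j x)%:E.
  by move=> _; apply: cvg_EFin; [exact: nearW | exact: cvgMr_tmp].
have dom_int : mu.-integrable [set: X] (fun x => (B * `|phi j x|)%:E).
  by apply: eq_integrable (integrableZl measurableT B (integrable_norm (integrable_phi j))) => //.
have g_dom N x : [set: X] x -> (`|g N x| <= (B * `|phi j x|)%:E)%E.
  by move=> _; rewrite /g /= lee_fin normrM ler_wpM2r.
have int_gE N : (j < N)%N -> (\int[mu]_(x in [set: X]) g N x = (a j)%:E)%E.
  move=> jN; have := Rintegral_psum_phiM a j N; rewrite jN => <-; rewrite fineK //.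
  apply: integrable_fin_num => //; apply: (le_integrable measurableT (g_meas N) _ dom_int) => x _.
  exact: le_trans (g_dom N x I) (lee_abs _).
have int_F : (\int[mu]_(x in [set: X]) (F x * phi j x)%:E = (a j)%:E)%E.
  apply: cvg_unique (dominated_cvg measurableT g_meas g_cvg _ dom_int g_dom) _ => //.
  by apply: cvg_near_cst; exists j.+1 => // N; exact: int_gE.
by rewrite /Rintegral int_F.
Qed.

End OrthonormalCoefficients.

Section CoefficientNorm.
Variables (R : realType) (T : Type) (lam : nat -> R) (phi : nat -> T -> R) (eta : R).
Hypothesis lam_gt0 : forall j, 0 < lam j.
Hypothesis lam_nonincr : forall j, lam j.+1 <= lam j.
Hypothesis eta_gt1 : 1 < eta.
Hypothesis mercer_diag_cvg :
  forall x, cvgn (fun N => \sum_(0 <= j < N) lam j * phi j x * phi j x).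
Implicit Types (a b c : nat -> R) (N : nat).

Definition coef_sqsum c N := \sum_(0 <= j < N) c j ^+ 2 / lam j `^ eta.
Definition coef_sqnorm c := limn (coef_sqsum c).

Lemma coef_sqsum_term_ge0 c j : 0 <= c j ^+ 2 / lam j `^ eta.
Proof. by rewrite divr_ge0 ?sqr_ge0 ?powR_ge0. Qed.

Lemma coef_sqsum_le c N : cvgn (coef_sqsum c) -> coef_sqsum c N <= coef_sqnorm c.
Proof. by apply: psum_le_limn; exact: coef_sqsum_term_ge0. Qed.

Lemma coef_sqnorm_ge0 c : cvgn (coef_sqsum c) -> 0 <= coef_sqnorm c.
Proof. by apply: limn_psum_ge0; exact: coef_sqsum_term_ge0. Qed.

Lemma is_cvg_coef_sqsum_lin a b (al be : R) :
  cvgn (coef_sqsum a) -> cvgn (coef_sqsum b) ->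
  cvgn (coef_sqsum (fun j => al * a j + be * b j)).
Proof.
move=> a_cvg b_cvg; rewrite /coef_sqsum.
apply: (@cvgn_psum_bounded _ _ (2 * al ^+ 2 * coef_sqnorm a + 2 * be ^+ 2 * coef_sqnorm b)).
  by move=> j; exact: (coef_sqsum_term_ge0 (fun j => al * a j + be * b j)).
move=> N; apply: (@le_trans _ _ (2 * al ^+ 2 * coef_sqsum a N + 2 * be ^+ 2 * coef_sqsum b N)).
  rewrite /coef_sqsum !mulr_sumr -big_split; apply: ler_sum => j _ /=.
  rewrite !mulrA -mulrDl ler_wpM2r ?invr_ge0 ?powR_ge0 //.
  by have := sqr_ge0 (al * a j - be * b j); nra.
have w_ge0 (z : R) : 0 <= 2 * z ^+ 2 by rewrite mulr_ge0 ?sqr_ge0.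
by apply: lerD; apply: ler_wpM2l => //; exact: coef_sqsum_le.
Qed.

Lemma is_cvg_coef_sqsumB a b : cvgn (coef_sqsum a) -> cvgn (coef_sqsum b) ->
  cvgn (coef_sqsum (fun j => a j - b j)).
Proof.
move=> a_cvg b_cvg; have := is_cvg_coef_sqsum_lin (al := 1) (be := -1) a_cvg b_cvg.
by congr (cvgn _); apply: funext => N; apply: eq_bigr => j _; rewrite mul1r mulN1r.
Qed.

Lemma coef_sqnorm_convex a b (t : R) :
  cvgn (coef_sqsum a) -> cvgn (coef_sqsum b) ->
  coef_sqnorm (fun j => (1 - t) * a j + t * b j) =
  (1 - t) * coef_sqnorm a + t * coef_sqnorm b
  - t * (1 - t) * coef_sqnorm (fun j => a j - b j).
Proof.
move=> a_cvg b_cvg; have ab_cvg := is_cvg_coef_sqsumB a_cvg b_cvg.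
apply: cvg_lim => //.
have -> : coef_sqsum (fun j => (1 - t) * a j + t * b j) =
   (fun N => (1 - t) * coef_sqsum a N + t * coef_sqsum b N
             - t * (1 - t) * coef_sqsum (fun j => a j - b j) N).
  apply: funext => N; rewrite /coef_sqsum !mulr_sumr -big_split -sumrB /=.
  by apply: eq_bigr => j _; ring.
by apply: cvgB; [apply: cvgD|]; exact: cvgMl_tmp.
Qed.

Lemma coef_sqnormBC a b : coef_sqnorm (fun j => b j - a j) = coef_sqnorm (fun j => a j - b j).
Proof.
by congr (limn _); apply: funext => N; apply: eq_bigr => j _; rewrite -opprB sqrrN.
Qed.

Lemma sum_abs_div_sqrt_le c N : cvgn (coef_sqsum c) ->
  cvgn (fun N => \sum_(0 <= j < N) lam j `^ (eta - 1)) ->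
  \sum_(0 <= j < N) `|c j| / Num.sqrt (lam j) <=
  Num.sqrt (coef_sqnorm c) * Num.sqrt (trace_pow lam eta).
Proof.
move=> c_cvg tr_cvg.
have termE j : `|c j| / Num.sqrt (lam j) =
    `|c j| / Num.sqrt (lam j `^ eta) * Num.sqrt (lam j `^ (eta - 1)).
  have lj := lam_gt0 j.
  rewrite (powR_subr1M _ lj) sqrtrM ?powR_ge0 //.
  by field; rewrite !gt_eqF ?sqrtr_gt0 ?powR_gt0.
under eq_bigr do rewrite termE.
rewrite -[X in X <= _]ger0_norm; last first.
  by apply: sumr_ge0 => j _; rewrite !mulr_ge0 ?invr_ge0 ?sqrtr_ge0.
have sq_coef j : (`|c j| / Num.sqrt (lam j `^ eta)) ^+ 2 = c j ^+ 2 / lam j `^ eta.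
  by rewrite expr_div_n sqr_sqrtr ?powR_ge0 // real_normK ?num_real.
have sq_pow j : Num.sqrt (lam j `^ (eta - 1)) ^+ 2 = lam j `^ (eta - 1).
  by rewrite sqr_sqrtr ?powR_ge0.
apply: cauchy_schwarz_psum_le.
  by under eq_bigr do rewrite sq_coef; exact: coef_sqsum_le.
under eq_bigr do rewrite sq_pow.
by apply: psum_le_limn => // j; exact: powR_ge0.
Qed.

Lemma lam_le_lam0 j : lam j <= lam 0.
Proof. by elim: j => [|j IHj] //; exact: le_trans (lam_nonincr j) IHj. Qed.

Lemma kernel_pow_term_ge0 x j : 0 <= lam j `^ eta * phi j x * phi j x.
Proof. by rewrite -mulrA -expr2 mulr_ge0 ?powR_ge0 ?sqr_ge0. Qed.

(* [lam j ^ eta <= lam 0 ^ (eta - 1) * lam j], so the Mercer series dominates. *)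
Lemma is_cvg_kernel_pow_diag x :
  cvgn (fun N => \sum_(0 <= j < N) lam j `^ eta * phi j x * phi j x).
Proof.
pose K1 := limn (fun N => \sum_(0 <= j < N) lam j * phi j x * phi j x).
apply: (@cvgn_psum_bounded _ _ (lam 0 `^ (eta - 1) * K1)) => [j|N].
  exact: kernel_pow_term_ge0.
have mercer_term_ge0 j : 0 <= lam j * phi j x * phi j x.
  by rewrite -mulrA -expr2 mulr_ge0 ?sqr_ge0 // ltW.
apply: le_trans _ (ler_wpM2l (powR_ge0 _ _) (psum_le_limn N mercer_term_ge0 (@mercer_diag_cvg x))).
rewrite mulr_sumr; apply: ler_sum => j _.
rewrite (powR_subr1M _ (lam_gt0 j)) -!mulrA ler_wpM2r //.
  by rewrite mulr_ge0 -?expr2 ?sqr_ge0 // ltW.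
by apply: ge0_ler_powR; rewrite ?subr_ge0 ?nnegrE ?lam_le_lam0 // ltW.
Qed.

Lemma kernel_pow_diag_psum_le x N :
  \sum_(0 <= j < N) lam j `^ eta * phi j x * phi j x <= kernel_pow lam phi eta x x.
Proof. by apply: psum_le_limn; [exact: kernel_pow_term_ge0 | exact: is_cvg_kernel_pow_diag]. Qed.

Lemma kernel_pow_diag_ge0 x : 0 <= kernel_pow lam phi eta x x.
Proof. by apply: limn_psum_ge0; [exact: kernel_pow_term_ge0 | exact: is_cvg_kernel_pow_diag]. Qed.

Lemma abs_psum_phi_le c x N : cvgn (coef_sqsum c) ->
  `|\sum_(0 <= j < N) c j * phi j x| <=
  Num.sqrt (coef_sqnorm c) * Num.sqrt (kernel_pow lam phi eta x x).
Proof.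
move=> c_cvg; pose w j := Num.sqrt (lam j `^ eta).
have w_gt0 j : 0 < w j by rewrite sqrtr_gt0 powR_gt0.
have w2 j : w j ^+ 2 = lam j `^ eta by rewrite sqr_sqrtr // powR_ge0.
have -> : \sum_(0 <= j < N) c j * phi j x = \sum_(0 <= j < N) (c j / w j) * (w j * phi j x).
  by apply: eq_bigr => j _; rewrite mulrA divfK // gt_eqF.
apply: cauchy_schwarz_psum_le.
  by under eq_bigr do rewrite expr_div_n w2; exact: coef_sqsum_le.
by under eq_bigr do rewrite exprMn w2 expr2 mulrA; exact: kernel_pow_diag_psum_le.
Qed.

End CoefficientNorm.

Section Rkhs.
Variables (R : realType) (T : pointedType) (G : set (set T)).
Variable mu : {finite_measure set (g_sigma_algebraType G) -> \bar R}.
Variables (lam : nat -> R) (phi : nat -> T -> R) (eta : R).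
Hypothesis lam_gt0 : forall j, 0 < lam j.
Hypothesis lam_nonincr : forall j, lam j.+1 <= lam j.
Hypothesis phi_meas : forall j,
  measurable_fun [set: g_sigma_algebraType G] (phi j : g_sigma_algebraType G -> R).
Hypothesis phi_sq_int : forall j,
  mu.-integrable [set: g_sigma_algebraType G] (fun x => ((phi j x) ^+ 2)%:E).
Hypothesis phi_orth : forall i j,
  \int[mu]_(x in [set: g_sigma_algebraType G]) (phi i x * phi j x) = (i == j)%:R.
Hypothesis eta_gt1 : 1 < eta.
Hypothesis mercer_diag_cvg :
  forall x, cvgn (fun N => \sum_(0 <= j < N) lam j * phi j x * phi j x).
Hypothesis kernel_pow_diag_bounded :
  exists k : R, forall x : T, kernel_pow lam phi eta x x <= k.

Local Notation kappa2 := (sup [set kernel_pow lam phi eta x x | x in [set: T]]).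
Local Notation rep := (rkhs_rep lam phi eta).
Local Notation sqnorm := (coef_sqnorm lam eta).

Lemma kernel_pow_diag_le_sup x : kernel_pow lam phi eta x x <= kappa2.
Proof.
apply: ub_le_sup; last by exists x.
by case: kernel_pow_diag_bounded => k k_ub; exists k => _ [y _ <-].
Qed.

Lemma rkhs_rep_psum_le f a : rep f a ->
  forall N x, `|\sum_(0 <= k < N) a k * phi k x| <= Num.sqrt (sqnorm a) * Num.sqrt kappa2.
Proof.
move=> [a_cvg _] N x.
apply: le_trans (abs_psum_phi_le lam_gt0 lam_nonincr eta_gt1 mercer_diag_cvg x N a_cvg) _.
have K_ge0 := kernel_pow_diag_ge0 lam_gt0 lam_nonincr eta_gt1 mercer_diag_cvg x.
rewrite ler_wpM2l ?sqrtr_ge0 // ler_sqrt ?kernel_pow_diag_le_sup //.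
exact: le_trans K_ge0 (kernel_pow_diag_le_sup x).
Qed.

Lemma rkhs_rep_abs_le f a x : rep f a ->
  `|f x| <= Num.sqrt (sqnorm a) * Num.sqrt kappa2.
Proof. by move=> fa; apply: norm_cvg_le (fa.2 x) _ => N; exact: rkhs_rep_psum_le fa N x. Qed.

Lemma rkhs_rep_l2_coef f a : rep f a -> forall j, l2_coef mu phi f j = a j.
Proof.
by move=> fa j; exact: (Rintegral_psum_lim_phiM phi_meas phi_sq_int phi_orth (rkhs_rep_psum_le fa) fa.2 j).
Qed.

Lemma rkhs_sqnormE f a : rep f a -> rkhs_sqnorm lam phi eta f = sqnorm a.
Proof.
move=> fa; rewrite /rkhs_sqnorm.
suff -> : [set limn (coef_sqsum lam eta b) | b in rep f] = [set sqnorm a] by exact: inf1.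
apply/seteqP; split => [_ [b fb <-]|_ ->]; last by exists a.
suff -> : b = a by [].
by apply: funext => j; rewrite -(rkhs_rep_l2_coef fb) (rkhs_rep_l2_coef fa).
Qed.

Lemma rkhs_rep_lin f g a b (al be : R) : rep f a -> rep g b ->
  rep (fun x => al * f x + be * g x) (fun j => al * a j + be * b j).
Proof.
move=> [a_cvg fa] [b_cvg gb]; split; first exact: is_cvg_coef_sqsum_lin.
move=> x; have -> : (fun N => \sum_(0 <= j < N) (al * a j + be * b j) * phi j x) =
    (fun N => al * \sum_(0 <= j < N) a j * phi j x + be * \sum_(0 <= j < N) b j * phi j x).
  apply: funext => N; rewrite !mulr_sumr -big_split; apply: eq_bigr => j _ /=.
  by rewrite mulrDl !mulrA.
by apply: cvgD; exact: cvgMl_tmp.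
Qed.

Lemma rkhs_repB f g a b : rep f a -> rep g b ->
  rep (fun x => f x - g x) (fun j => a j - b j).
Proof.
have oneN1 (I : Type) (u v : I -> R) : (fun i => u i - v i) = (fun i => 1 * u i + -1 * v i).
  by apply: funext => i; rewrite mul1r mulN1r.
by move=> fa gb; rewrite (oneN1 _ f) (oneN1 _ a); exact: rkhs_rep_lin.
Qed.

Lemma norm1C_rep_le f a : rep f a ->
  cvgn (fun N => \sum_(0 <= j < N) lam j `^ (eta - 1)) ->
  (norm1C mu lam phi f <= (Num.sqrt (sqnorm a) * Num.sqrt (trace_pow lam eta))%:E)%E.
Proof.
move=> fa tr_cvg; apply: lime_le.
  by apply: is_cvg_nneseries => j _ _; rewrite lee_fin divr_ge0 ?sqrtr_ge0.
apply: nearW => N; rewrite sumEFin lee_fin.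
under eq_bigr do rewrite (rkhs_rep_l2_coef fa).
exact: (sum_abs_div_sqrt_le lam_gt0 N fa.1 tr_cvg).
Qed.

Section RegularizedRisk.
Variables (Y : Type) (ell : Y -> R -> R) (M psi : R) (n : nat).
Hypothesis ell_adm : admissible_loss ell M.
Hypothesis psi_gt0 : 0 < psi.
Implicit Types (D : 'I_n -> T * Y) (f g : T -> R).
Local Notation risk D := (reg_risk ell D lam phi eta psi).

Definition emp_risk D f := n%:R^-1 * \sum_(i < n) ell (D i).2 (f (D i).1).

Lemma reg_riskE D f a : rep f a -> risk D f = emp_risk D f + psi * sqnorm a.
Proof. by move=> fa; rewrite /reg_risk (rkhs_sqnormE fa). Qed.

Lemma emp_risk_convex D f g t : 0 <= t <= 1 ->
  emp_risk D (fun x => (1 - t) * f x + t * g x) <=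
  (1 - t) * emp_risk D f + t * emp_risk D g.
Proof.
move=> /andP[t_ge0 t_le1]; rewrite /emp_risk mulrCA [t * _]mulrCA -mulrDr.
rewrite ler_wpM2l ?invr_ge0 // !mulr_sumr -big_split ler_sum // => i _ /=.
have := ell_adm.1 (D i).2 (f (D i).1) (g (D i).1) (1 - t).
by rewrite subKr; apply; lra.
Qed.

(* Minimality of f against f + t (g - f), where the regularizer contributes
   - t (1 - t) psi ||a - b||^2; then let t -> 0. *)
Lemma reg_minimizer_growth D f g a b : rep f a -> rep g b ->
  is_reg_minimizer ell D lam phi eta psi f ->
  psi * sqnorm (fun j => a j - b j) <= risk D g - risk D f.
Proof.
move=> fa gb [_ f_min]; rewrite (reg_riskE D fa) (reg_riskE D gb).
have q_ge0 := coef_sqnorm_ge0 (is_cvg_coef_sqsumB fa.1 gb.1).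
apply: le_of_forall_onemM => t /andP[t_gt0 t_lt1].
have ft := rkhs_rep_lin (1 - t) t fa gb.
have := f_min _ (ex_intro _ _ ft).
rewrite (reg_riskE D fa) (reg_riskE D ft) (coef_sqnorm_convex _ fa.1 gb.1).
have t01 : 0 <= t <= 1 by rewrite !ltW.
have := emp_risk_convex D f g t01 => convex min_le.
suff : t * ((1 - t) * (psi * sqnorm (fun j => a j - b j))) <=
    t * (emp_risk D g + psi * sqnorm b - (emp_risk D f + psi * sqnorm a)).
  by rewrite ler_pM2l.
nra.
Qed.

Lemma admissible_loss_ge0 (y : Y) : 0 <= M.
Proof.
have := ell_adm.2 y 1 0; rewrite subr0 normr1 mulr1.
exact: le_trans (normr_ge0 _).
Qed.

Lemma emp_risk_adjacentB D D' i0 f g B :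
  (forall j, j <> i0 -> D j = D' j) -> (forall x, `|f x - g x| <= B) ->
  (emp_risk D g - emp_risk D' g) - (emp_risk D f - emp_risk D' f) <= n%:R^-1 * (2 * (M * B)).
Proof.
move=> DD' fg_le.
have diffE h : emp_risk D h - emp_risk D' h =
    n%:R^-1 * (ell (D i0).2 (h (D i0).1) - ell (D' i0).2 (h (D' i0).1)).
  rewrite /emp_risk -mulrBr (bigD1 i0) // [X in _ - X](bigD1 i0) //=.
  have -> : \sum_(i < n | i != i0) ell (D i).2 (h (D i).1) =
            \sum_(i < n | i != i0) ell (D' i).2 (h (D' i).1).
    by apply: eq_bigr => i /eqP i_neq; rewrite DD'.
  by congr (_ * _); ring.
rewrite !diffE -mulrBr ler_wpM2l ?invr_ge0 //.
have M_ge0 := admissible_loss_ge0 (D i0).2.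
have lip y u v : `|u - v| <= B -> ell y u - ell y v <= M * B.
  move=> uv; apply: le_trans (ler_norm _) _; apply: le_trans (ell_adm.2 y u v) _.
  exact: ler_wpM2l.
have gf_le x : `|g x - f x| <= B by rewrite distrC.
have := lip (D i0).2 _ _ (gf_le (D i0).1).
have := lip (D' i0).2 _ _ (fg_le (D' i0).1).
lra.
Qed.

Lemma reg_minimizer_stability D D' i0 f f' a b :
  (forall j, j <> i0 -> D j = D' j) -> rep f a -> rep f' b ->
  is_reg_minimizer ell D lam phi eta psi f ->
  is_reg_minimizer ell D' lam phi eta psi f' ->
  Num.sqrt (sqnorm (fun j => a j - b j)) <= M / (psi * n%:R) * Num.sqrt kappa2.
Proof.
move=> DD' fa f'b f_min f'_min.
have growth := reg_minimizer_growth fa f'b f_min.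
have growth' := reg_minimizer_growth f'b fa f'_min.
rewrite coef_sqnormBC in growth'.
move: growth growth'; rewrite !(reg_riskE D fa) !(reg_riskE D f'b).
rewrite !(reg_riskE D' fa) !(reg_riskE D' f'b).
set q := sqnorm _; set r := Num.sqrt q; set s := Num.sqrt kappa2 => growth growth'.
have q_ge0 : 0 <= q := coef_sqnorm_ge0 (is_cvg_coef_sqsumB fa.1 f'b.1).
have ff'_le x : `|f x - f' x| <= r * s.
  exact: rkhs_rep_abs_le (rkhs_repB fa f'b).
have adjacent := emp_risk_adjacentB DD' ff'_le.
have M_ge0 := admissible_loss_ge0 (D i0).2.
have -> : M / (psi * n%:R) * s = n%:R^-1 * M * s / psi by rewrite invfM; ring.
have s_ge0 : 0 <= s := sqrtr_ge0 _.
apply: le_div_of_mul_sqr_le; rewrite ?sqrtr_ge0 ?mulr_ge0 ?invr_ge0 //.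
rewrite sqr_sqrtr //; lra.
Qed.

End RegularizedRisk.

End Rkhs.

Theorem theorem9
  (R : realType)
  (* compact metric space T (pointed, i.e. nonempty; Hausdorff pseudometric = metric) *)
  (T : pseudoPMetricType R) (HTsep : hausdorff_space T)
  (HTcpt : compact [set: T])
  (* finite Borel measure on T *)
  (mu : {finite_measure set (g_sigma_algebraType (@open T)) -> \bar R})
  (* kernel C and its Mercer data *)
  (C : T -> T -> R)
  (HCcont : continuous (fun p : T * T => C p.1 p.2))
  (HCsym : kernel_symmetric C) (HCpsd : kernel_psd C)
  (lam : nat -> R) (phi : nat -> T -> R)
  (Hlam_pos : forall j, 0 < lam j)
  (Hlam_dec : forall j, lam j.+1 <= lam j)
  (Hphi_meas : forall j,
     measurable_fun [set: g_sigma_algebraType (@open T)]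
       (phi j : g_sigma_algebraType (@open T) -> R))
  (Hphi_L2 : forall j,
     mu.-integrable [set: g_sigma_algebraType (@open T)]
       (fun x => ((phi j x) ^+ 2)%:E))
  (Hphi_orth : forall i j,
     Rintegral mu [set: g_sigma_algebraType (@open T)]
       (fun x => phi i x * phi j x) = (i == j)%:R)
  (Hmercer : forall s t,
     (fun N => \sum_(0 <= j < N) lam j * phi j s * phi j t) @ \oo --> C s t)
  (* eta > 1, finite trace of C^(eta-1), bounded diagonal of C^eta *)
  (eta : R) (Heta : 1 < eta)
  (Htr : cvgn (fun N => \sum_(0 <= j < N) lam j `^ (eta - 1)))
  (Hkappa : exists k : R, forall x : T, kernel_pow lam phi eta x x <= k)
  (* data and loss *)
  (Y : Type) (ell : Y -> R -> R) (M : R)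
  (Hell : admissible_loss ell M)
  (psi : R) (Hpsi : 0 < psi) (n : nat) :
  forall (D D' : 'I_n -> T * Y) (fD fD' : T -> R),
    adjacent_datasets D D' ->
    is_reg_minimizer ell D lam phi eta psi fD ->
    is_reg_minimizer ell D' lam phi eta psi fD' ->
    (norm1C mu lam phi (fun x => (fD x - fD' x)%R)
     <= (M / (psi * n%:R)
         * Num.sqrt (sup [set kernel_pow lam phi eta x x | x in [set: T]])
         * Num.sqrt (trace_pow lam eta))%:E)%E.
Proof.
move=> D D' fD fD' [i0 [_ DD']] fD_min fD'_min.
have mercer_diag_cvg x := cvgP _ (Hmercer x x).
have [[a fDa] [b fD'b]] := (fD_min.1, fD'_min.1).
have diff_rep := rkhs_repB fDa fD'b.
have norm1C_le := norm1C_rep_le Hlam_pos Hlam_dec Hphi_meas Hphi_L2 Hphi_orth Heta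
  mercer_diag_cvg Hkappa.
have stability := reg_minimizer_stability Hlam_pos Hlam_dec Hphi_meas Hphi_L2 Hphi_orth
  Heta mercer_diag_cvg Hkappa Hell Hpsi.
apply: le_trans (norm1C_le _ _ diff_rep Htr) _.
rewrite lee_fin ler_wpM2r ?sqrtr_ge0 //.
exact: stability DD' fDa fD'b fD_min fD'_min.
Qed.
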